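(* Let $\mathcal{A} \subseteq 2^{[8]}$ consist of the following 11 sets: $A_0=[8]$, $A_1=\{2,4,6,7,8\}$, $A_2=\{1,3,5,8\}$, $A_3=\{1,4,7,8\}$, $A_4=\{2,3,5,6\}$, $A_5=\{1,3,7\}$, $A_6=\{2,3,5\}$, $A_7=\{2,4,6\}$, $A_8=\{4,5,6,7\}$, $B_{1,2}=\{8\}$, $B_{3,4}=\{1\}$. Let $\mathcal{F} = \{[8]\} \cup \{[8]\setminus\{i\} : i \in [8]\} \cup \{[8]\setminus\{1,2\},\ [8]\setminus\{3,4\}\}$, and define the bijection $\mathcal{A}\to\mathcal{F}$ by $F_{A_0}=[8]$, $F_{A_i}=[8]\setminus\{i\}$ for $i\in[8]$, $F_{B_{1,2}}=[8]\setminus\{1,2\}$, $F_{B_{3,4}}=[8]\setminus\{3,4\}$. Then $\mathcal{F}$ is a filter and $\mathcal{A}$ satisfies Condition 1 with this filter and bijection, while every element $x \in [8]$ belongs to exactly $5$ of the $11$ sets of $\mathcal{A}$. Consequently, it is false that every family $\mathcal{A}\subseteq 2^{[n]}$ satisfying Condition 1 has an element of $[n]$ lying in at least half of the sets of $\mathcal{A}$.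
   Context: $[n]=\{1,\dots,n\}$. A family $\mathcal{F} \subseteq 2^{[n]}$ is a filter if $F \in \mathcal{F}$ and $F \subseteq G \subseteq [n]$ imply $G \in \mathcal{F}$. For $A \subseteq B \subseteq [n]$, $[A,B] = \{C : A \subseteq C \subseteq B\}$. A family $\mathcal{A} \subseteq 2^{[n]}$ satisfies Condition 1 if there exist a filter $\mathcal{F} \subseteq 2^{[n]}$ and a bijection $A \mapsto F_A$ from $\mathcal{A}$ onto $\mathcal{F}$ such that (i) $A \subseteq F_A$ for all $A \in \mathcal{A}$, and (ii) for distinct $A, B \in \mathcal{A}$, $[A,F_A] \cap [B,F_B] = \emptyset$ (equivalently, at least one of $A \setminus F_B$, $B \setminus F_A$ is nonempty). *)

From HB Require Import structures.
From mathcomp Require Import all_boot.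
Set Implicit Arguments. Unset Strict Implicit. Unset Printing Implicit Defensive.

(* Convention: the ground set [n] = {1,...,n} is represented by 'I_n,
   where the ordinal i : 'I_n stands for the element i+1 of [n]. *)

Definition is_filter (n : nat) (F : {set {set 'I_n}}) : Prop :=
  forall X Y : {set 'I_n}, X \in F -> X \subset Y -> Y \in F.

Definition interval (n : nat) (A B : {set 'I_n}) : {set {set 'I_n}} :=
  [set C : {set 'I_n} | (A \subset C) && (C \subset B)].

Definition cond1_with (n : nat) (A F : {set {set 'I_n}})
    (f : {set 'I_n} -> {set 'I_n}) : Prop :=
  [/\ is_filter F,
      {in A &, injective f},
      f @: A = F,
      (forall X, X \in A -> X \subset f X) &
      (forall X Y, X \in A -> Y \in A -> X != Y ->
         [disjoint interval X (f X) & interval Y (f Y)])].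

Definition condition1 (n : nat) (A : {set {set 'I_n}}) : Prop :=
  exists (F : {set {set 'I_n}}) (f : {set 'I_n} -> {set 'I_n}), cond1_with A F f.

Definition degree (n : nat) (A : {set {set 'I_n}}) (x : 'I_n) : nat :=
  #|[set X in A | x \in X]|.

Definition s8 (l : seq nat) : {set 'I_8} := [set i : 'I_8 | i.+1 \in l].
Definition comp8 (l : seq nat) : {set 'I_8} := [set i : 'I_8 | i.+1 \notin l].

Definition A0 : {set 'I_8} := [set: 'I_8].
Definition A1 := s8 [:: 2; 4; 6; 7; 8].
Definition A2 := s8 [:: 1; 3; 5; 8].
Definition A3 := s8 [:: 1; 4; 7; 8].
Definition A4 := s8 [:: 2; 3; 5; 6].
Definition A5 := s8 [:: 1; 3; 7].
Definition A6 := s8 [:: 2; 3; 5].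
Definition A7 := s8 [:: 2; 4; 6].
Definition A8 := s8 [:: 4; 5; 6; 7].
Definition B12 := s8 [:: 8].
Definition B34 := s8 [:: 1].

Definition calA : {set {set 'I_8}} :=
  [set A0; A1; A2; A3; A4; A5; A6; A7; A8; B12; B34].

Definition calF : {set {set 'I_8}} :=
  [set [set: 'I_8]; comp8 [:: 1]; comp8 [:: 2]; comp8 [:: 3]; comp8 [:: 4];
       comp8 [:: 5]; comp8 [:: 6]; comp8 [:: 7]; comp8 [:: 8];
       comp8 [:: 1; 2]; comp8 [:: 3; 4]].

(* The bijection A -> F (its values outside calA are irrelevant). *)
Definition fA (X : {set 'I_8}) : {set 'I_8} :=
  if X == A0 then [set: 'I_8]
  else if X == A1 then comp8 [:: 1]
  else if X == A2 then comp8 [:: 2]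
  else if X == A3 then comp8 [:: 3]
  else if X == A4 then comp8 [:: 4]
  else if X == A5 then comp8 [:: 5]
  else if X == A6 then comp8 [:: 6]
  else if X == A7 then comp8 [:: 7]
  else if X == A8 then comp8 [:: 8]
  else if X == B12 then comp8 [:: 1; 2]
  else if X == B34 then comp8 [:: 3; 4]
  else [set: 'I_8].

From mathcomp Require Import all_boot.
Set Implicit Arguments. Unset Strict Implicit. Unset Printing Implicit Defensive.

(* Every claim is a finite check on eleven subsets of [8], made computable by
   replacing a set with its bit list.  Being a filter only has to be checked
   for one-element extensions, injectivity of fA on calA follows from
   #|calF| = #|calA|, and two intervals [X, fA X], [Y, fA Y] are disjoint
   unless X is below fA Y and Y is below fA X. *)

Lemma interval_disjointE n (X Y FX FY : {set 'I_n}) :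
  [disjoint interval X FX & interval Y FY] = ~~ (X :|: Y \subset FX :&: FY).
Proof.
apply/idP/idP => [dis | not_sub].
  apply/negP; rewrite subsetI !subUset => /andP[/andP[XFX YFX] /andP[XFY YFY]].
  have inX : X :|: Y \in interval X FX by rewrite inE subsetUl subUset XFX.
  have inY : X :|: Y \in interval Y FY by rewrite inE subsetUr subUset XFY.
  by rewrite (disjointFr dis inX) in inY.
rewrite -setI_eq0; apply/eqP/setP => C; rewrite !inE.
apply/negbTE/negP => /andP[/andP[XC CFX] /andP[YC CFY]].
by apply/(negP not_sub); rewrite subsetI !subUset !(subset_trans _ CFX) ?(subset_trans _ CFY).
Qed.

Lemma is_filter_setU1 n (F : {set {set 'I_n}}) :
  (forall X x, X \in F -> x |: X \in F) -> is_filter F.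
Proof.
move=> closedF X Y XF XY; have [k] := ubnP #|Y :\: X|.
elim: k X XF XY => // k IHk X XF XY ltYXk.
have [/eqP|[x YXx]] := set_0Vmem (Y :\: X).
  by rewrite setD_eq0 => YX; rewrite (eqP (_ : Y == X)) // eqEsubset YX.
apply: IHk (closedF X x XF) _ _; first by rewrite subUset sub1set XY (setDP YXx).1.
by rewrite setUC -setDDl; move: ltYXk; rewrite (cardsD1 x) YXx.
Qed.

Lemma cond1_withP n (A F : {set {set 'I_n}}) (f : {set 'I_n} -> {set 'I_n}) :
  is_filter F -> f @: A = F -> #|F| = #|A| ->
  {in A, forall X : {set 'I_n}, X \subset f X} ->
  {in A &, forall X Y : {set 'I_n}, X != Y -> ~~ ((X \subset f Y) && (Y \subset f X))} ->
  cond1_with A F f.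
Proof.
move=> filterF imAF cardFA subf sep; split=> // [|X Y XA YA XY].
  by apply/imset_injP; rewrite imAF cardFA.
rewrite interval_disjointE subsetI !subUset; apply: contra (sep X Y XA YA XY).
by case/andP=> /andP[_ ->] /andP[-> _].
Qed.

Lemma card_set_count (T : finType) (s : seq T) (P : pred T) :
  uniq s -> #|[set x in s | P x]| = count P s.
Proof.
move=> uniq_s; rewrite -size_filter -(card_uniqP (filter_uniq P uniq_s)) -cardsE.
by apply: eq_card => x; rewrite !inE mem_filter andbC.
Qed.

Section Bits.

Variable n : nat.
Implicit Types X Y : {set 'I_n}.

(* Finsets are locked and do not evaluate; their bit lists do. *)
Definition bits X : seq bool := [seq i \in X | i <- enum 'I_n].

Lemma size_bits X : size (bits X) = n.
Proof. by rewrite size_map size_enum_ord. Qed.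

Lemma nth_bits X (i : 'I_n) : nth false (bits X) i = (i \in X).
Proof. by rewrite (nth_map i) ?nth_ord_enum // size_enum_ord. Qed.

Lemma subsetEbits X Y : (X \subset Y) = all2 implb (bits X) (bits Y).
Proof.
rewrite all2E !size_bits eqxx zip_map all_map.
by apply/subsetP/allP => [XY i _ | XY i]; [apply/implyP/XY | apply/implyP/XY; rewrite mem_enum].
Qed.

Lemma bits_inj : injective bits.
Proof.
have all2_implb_refl (b : seq bool) : all2 implb b b by elim: b => //= a b ->; rewrite implybb.
by move=> X Y eqXY; apply/eqP; rewrite eqEsubset !subsetEbits eqXY all2_implb_refl.
Qed.

Lemma eqEbits X Y : (X == Y) = (bits X == bits Y).
Proof. by rewrite (inj_eq bits_inj). Qed.

Lemma bits_setU1 (x : 'I_n) X : bits (x |: X) = set_nth false (bits X) x true.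
Proof.
apply: (@eq_from_nth _ false) => [|j]; first by rewrite size_set_nth !size_bits; apply/esym/maxn_idPr.
rewrite size_bits => ltjn.
by rewrite nth_set_nth /= (nth_bits X (Ordinal ltjn)) (nth_bits _ (Ordinal ltjn)) in_setU1.
Qed.

Lemma bits_setT : bits [set: 'I_n] = nseq n true.
Proof.
apply: (@eq_from_nth _ false) => [|i]; rewrite size_bits ?size_nseq // => ltin.
by rewrite nth_nseq ltin (nth_bits _ (Ordinal ltin)) inE.
Qed.

End Bits.

Arguments bits {n}.

Lemma bits_s8 (l : seq nat) : bits (s8 l) = [seq k.+1 \in l | k <- iota 0 8].
Proof. by rewrite -val_enum_ord -map_comp; apply: eq_map => i; rewrite inE. Qed.

Lemma bits_comp8 (l : seq nat) : bits (comp8 l) = [seq k.+1 \notin l | k <- iota 0 8].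
Proof. by rewrite -val_enum_ord -map_comp; apply: eq_map => i; rewrite inE. Qed.

Definition sA : seq {set 'I_8} := [:: A0; A1; A2; A3; A4; A5; A6; A7; A8; B12; B34].
Definition sF : seq {set 'I_8} :=
  [:: [set: 'I_8]; comp8 [:: 1]; comp8 [:: 2]; comp8 [:: 3]; comp8 [:: 4];
      comp8 [:: 5]; comp8 [:: 6]; comp8 [:: 7]; comp8 [:: 8];
      comp8 [:: 1; 2]; comp8 [:: 3; 4]].

Ltac unfold_family_bits :=
  unfold sA, sF, A0, A1, A2, A3, A4, A5, A6, A7, A8, B12, B34;
  rewrite /= ?bits_setT ?bits_s8 ?bits_comp8.

Lemma calAE : calA = [set X in sA].
Proof. by apply/setP => X; rewrite !inE -!orbA. Qed.

Lemma calFE : calF = [set X in sF].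
Proof. by apply/setP => X; rewrite !inE -!orbA. Qed.

Lemma uniq_sA : uniq sA.
Proof. by rewrite -(map_inj_uniq (@bits_inj 8)); unfold_family_bits. Qed.

Lemma uniq_sF : uniq sF.
Proof. by rewrite -(map_inj_uniq (@bits_inj 8)); unfold_family_bits. Qed.

Lemma map_fA_sA : map fA sA = sF.
Proof. by rewrite /= /fA !eqEbits; unfold_family_bits. Qed.

Lemma card_calA : #|calA| = 11.
Proof. by rewrite calAE cardsE (card_uniqP uniq_sA). Qed.

Lemma card_calF : #|calF| = 11.
Proof. by rewrite calFE cardsE (card_uniqP uniq_sF). Qed.

Lemma imset_fA_calA : fA @: calA = calF.
Proof.
apply/setP => Y; rewrite calAE calFE in_set -map_fA_sA.
by apply/imsetP/mapP => -[X XA ->]; exists X; rewrite ?in_set in XA *.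
Qed.

Lemma calF_setU1_closed X x : X \in calF -> x |: X \in calF.
Proof.
have closed : all (fun b => all (fun k => set_nth false b k true \in map bits sF) (iota 0 8))
                  (map bits sF) by unfold_family_bits.
rewrite calFE !in_set -!(mem_map (@bits_inj 8)) bits_setU1 => /(allP closed) /allP; apply.
by rewrite mem_iota ltn_ord.
Qed.

Lemma graph_fA X : X \in sA -> (X, fA X) \in zip sA sF.
Proof. by move=> XA; rewrite -map_fA_sA -[sA in zip sA _]map_id zip_map map_f. Qed.

Lemma fA_extensive : {in calA, forall X : {set 'I_8}, X \subset fA X}.
Proof.
have ext : all (fun p : {set 'I_8} * {set 'I_8} => p.1 \subset p.2) (zip sA sF).
  by rewrite (eq_all (fun p => subsetEbits p.1 p.2)); unfold_family_bits.
by move=> X; rewrite calAE in_set => /graph_fA /(allP ext).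
Qed.

Lemma calA_separated :
  {in calA &, forall X Y : {set 'I_8}, X != Y -> ~~ ((X \subset fA Y) && (Y \subset fA X))}.
Proof.
pose sep (p q : {set 'I_8} * {set 'I_8}) :=
  (p.1 != q.1) ==> ~~ ((p.1 \subset q.2) && (q.1 \subset p.2)).
have sepA : allrel sep (zip sA sF) (zip sA sF).
  have sepE p q : sep p q = (bits p.1 != bits q.1) ==>
      ~~ (all2 implb (bits p.1) (bits q.2) && all2 implb (bits q.1) (bits p.2)).
    by rewrite /sep eqEbits !subsetEbits.
  by rewrite (eq_allrel sepE) /allrel; unfold_family_bits.
move=> X Y; rewrite calAE !in_set => /graph_fA XA /graph_fA YA XY.
by have /implyP := allrelP sepA _ _ XA YA; apply.
Qed.

Lemma degree_calA x : degree calA x = 5.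
Proof.
have deg5 : all (fun k => count (fun b => nth false b k) (map bits sA) == 5) (iota 0 8).
  by unfold_family_bits.
rewrite /degree (_ : [set X in calA | x \in X] = [set X in sA | x \in X]); last first.
  by apply/setP => X; rewrite calAE !in_set.
rewrite card_set_count ?uniq_sA //.
have /(allP deg5) /eqP : (x : nat) \in iota 0 8 by rewrite mem_iota ltn_ord.
by rewrite count_map (eq_count (fun X => nth_bits X x)).
Qed.

Theorem mainTheorem3 :
  #|calA| = 11 /\
  is_filter calF /\
  cond1_with calA calF fA /\
  (forall x : 'I_8, degree calA x = 5) /\
  (condition1 calA /\ forall x : 'I_8, 2 * degree calA x < #|calA|) /\
  ~ (forall (n : nat) (A : {set {set 'I_n}}),
        condition1 A -> exists x : 'I_n, #|A| <= 2 * degree A x).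
Proof.
have filterF : is_filter calF by apply: is_filter_setU1; exact: calF_setU1_closed.
have cond1 : cond1_with calA calF fA.
  apply: cond1_withP => //; [exact: imset_fA_calA | | exact: fA_extensive | exact: calA_separated].
  by rewrite card_calA card_calF.
have small_degree x : 2 * degree calA x < #|calA| by rewrite degree_calA card_calA.
have condA : condition1 calA by exists calF, fA.
split; first exact: card_calA.
split; first exact: filterF.
split; first exact: cond1.
split; first exact: degree_calA.
split; first by split.
by move=> /(_ 8 calA condA) [x]; rewrite leqNgt small_degree.
Qed.
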